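(* For every set $\Gamma$ of triples about atomic actions, every program $C$ and all $P,Q\subseteq\Sigma$: if $\Gamma\vdash\{\mathbf 1P\}\ C\ \{\Box Q\}$ then $\Gamma\vdash\{\Box P\}\ C\ \{\Box Q\}$.
   Context: Partial semiring $\mathcal A=\langle U,+,\cdot,\mathbf 0,\mathbf 1\rangle$ ($+$ commutative, associative, possibly partial, unit $\mathbf 0$; $\cdot$ total, associative, unit $\mathbf 1$; two-sided distributivity; $\mathbf 0$ annihilates), naturally ordered, Scott continuous, with a top element; infinite sums are suprema of finite partial sums. $\mathcal W(\Sigma)$: maps $m:\Sigma\to U$ with countable support $\mathrm{supp}(m)=\{\sigma:m(\sigma)\ne\mathbf 0\}$ and defined mass $|m|=\sum_{\sigma\in\mathrm{supp}(m)}m(\sigma)$; operations pointwise. $\eta(\sigma)$ is $\mathbf 1$ at $\sigma$ and $\mathbf 0$ elsewhere; $f^\dagger(m)(\tau)=\sum_{\sigma\in\mathrm{supp}(m)}m(\sigma)\cdot f(\sigma)(\tau)$. Programs over states $\Sigma$: $C::=\mathsf{skip}\mid C_1;C_2\mid C_1+C_2\mid\mathsf{assume}\ e\mid C^{\langle e,e'\rangle}\mid a$ with atomic actions $a$ ($[\![a]\!]:\Sigma\to\mathcal W(\Sigma)$), $e$ a test (Boolean combination of $\mathsf{true},\mathsf{false}$ and primitive tests $t\subseteq\Sigma$, value $\mathbf 1$ iff true) or a weight $u\in U$; semantics $[\![\mathsf{skip}]\!](\sigma)=\eta(\sigma)$, $[\![C_1;C_2]\!](\sigma)=[\![C_2]\!]^\dagger([\![C_1]\!](\sigma))$,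 $[\![C_1+C_2]\!](\sigma)=[\![C_1]\!](\sigma)+[\![C_2]\!](\sigma)$, $[\![\mathsf{assume}\ e]\!](\sigma)=[\![e]\!](\sigma)\cdot\eta(\sigma)$, $[\![C^{\langle e,e'\rangle}]\!]$ the least fixed point of $\Phi(f)(\sigma)=[\![e]\!](\sigma)\cdot f^\dagger([\![C]\!](\sigma))+[\![e']\!](\sigma)\cdot\eta(\sigma)$. Assertions are subsets of $\mathcal W(\Sigma)$; $\bigoplus_{x\in T}\phi(x)=\{\sum_{t\in T}m_t: m_t\in\phi(t)\ \forall t\}$, $\varphi\oplus\psi$ the binary case, $u\odot\varphi=\{u\cdot m:m\in\varphi\}$, $\varphi\odot u=\{m\cdot u:m\in\varphi\}$; $\mathbf 1P=\{m:|m|=\mathbf 1,\mathrm{supp}(m)\subseteq P\}$, $\Box P=\{m:\mathrm{supp}(m)\subseteq P\}$. $\Gamma\vdash\{\varphi\}C\{\psi\}$ means derivable from the axioms in $\Gamma$ using: (Skip) $\{\varphi\}\mathsf{skip}\{\varphi\}$; (Seq) $\{\varphi\}C_1\{\vartheta\},\{\vartheta\}C_2\{\psi\}\Rightarrow\{\varphi\}C_1;C_2\{\psi\}$; (Plus) $\{\varphi\}C_1\{\psi_1\},\{\varphi\}C_2\{\psi_2\}\Rightarrow\{\varphi\}C_1+C_2\{\psi_1\oplus\psi_2\}$; (Assume) if $[\![e]\!](\sigma)=u$ for all $m\in\varphi,\sigma\in\mathrm{supp}(m)$ then $\{\varphi\}\mathsf{assume}\ e\{\varphi\odot u\}$; (Iter)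 if $(\psi_n)$ converges to $\psi_\infty$ (whenever $m_n\in\psi_n$ for all $n$, $\sum_n m_n\in\psi_\infty$) and for all $n$, $\{\varphi_n\}\mathsf{assume}\ e;C\{\varphi_{n+1}\}$ and $\{\varphi_n\}\mathsf{assume}\ e'\{\psi_n\}$, then $\{\varphi_0\}C^{\langle e,e'\rangle}\{\psi_\infty\}$; (False) $\{\emptyset\}C\{\varphi\}$; (True) $\{\varphi\}C\{\mathcal W(\Sigma)\}$; (Scale) $\{\varphi\}C\{\psi\}\Rightarrow\{u\odot\varphi\}C\{u\odot\psi\}$; (Disj), (Conj): from two triples infer the triple with $\cup$, resp. $\cap$, of pre- and postconditions; (Choice) $\forall t\in T.\{\phi(t)\}C\{\phi'(t)\}\Rightarrow\{\bigoplus_{x\in T}\phi(x)\}C\{\bigoplus_{x\in T}\phi'(x)\}$; (Exists) same premises $\Rightarrow\{\bigcup_t\phi(t)\}C\{\bigcup_t\phi'(t)\}$; (Consequence) $\varphi'\subseteq\varphi$, $\{\varphi\}C\{\psi\}$, $\psi\subseteq\psi'\Rightarrow\{\varphi'\}C\{\psi'\}$. *)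

From Stdlib Require Import List ClassicalEpsilon.
Import ListNotations.
Set Implicit Arguments.
Unset Strict Implicit.

Section PSR.
Variables (U : Type) (plus : U -> U -> option U) (zero : U).

Definition nle (u v : U) : Prop := exists w, plus u w = Some v.

Definition is_lub (D : U -> Prop) (s : U) : Prop :=
  (forall x, D x -> nle x s) /\ (forall b, (forall x, D x -> nle x b) -> nle s b).

Definition directed (D : U -> Prop) : Prop :=
  (exists x, D x) /\
  (forall x y, D x -> D y -> exists z, D z /\ nle x z /\ nle y z).

Inductive fsum : list U -> U -> Prop :=
| fsum_nil : fsum [] zero
| fsum_cons : forall u l s r, fsum l s -> plus u s = Some r -> fsum (u :: l) r.

Definition is_sum (I : Type) (f : I -> U) (s : U) : Prop :=
  (forall l : list I, NoDup l -> exists t, fsum (map f l) t) /\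
  is_lub (fun t => exists l : list I, NoDup l /\ fsum (map f l) t) s.
End PSR.

Definition obind {A B : Type} (f : A -> option B) (o : option A) : option B :=
  match o with Some a => f a | None => None end.

Record psemiring := PSemiring {
  car :> Type;
  pplus : car -> car -> option car;
  pmul : car -> car -> car;
  pzero : car;
  pone : car;
  pplus_comm : forall u v, pplus u v = pplus v u;
  pplus_assoc : forall u v w,
    obind (fun x => pplus x w) (pplus u v) =
    obind (fun y => pplus u y) (pplus v w);
  pplus_0 : forall u, pplus u pzero = Some u;
  pmul_assoc : forall u v w, pmul u (pmul v w) = pmul (pmul u v) w;
  pmul_1l : forall u, pmul pone u = u;
  pmul_1r : forall u, pmul u pone = u;
  pmul_distl : forall u v w x, pplus v w = Some x ->
    pplus (pmul u v) (pmul u w) = Some (pmul u x);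
  pmul_distr : forall u v w x, pplus v w = Some x ->
    pplus (pmul v u) (pmul w u) = Some (pmul x u);
  pmul_0l : forall u, pmul pzero u = pzero;
  pmul_0r : forall u, pmul u pzero = pzero;
  pnle_antisym : forall u v, nle pplus u v -> nle pplus v u -> u = v;
  pdirected_sup : forall D, directed pplus D -> exists s, is_lub pplus D s;
  pmul_contl : forall u D s, directed pplus D -> is_lub pplus D s ->
    is_lub pplus (fun y => exists d, D d /\ y = pmul u d) (pmul u s);
  pmul_contr : forall u D s, directed pplus D -> is_lub pplus D s ->
    is_lub pplus (fun y => exists d, D d /\ y = pmul d u) (pmul s u);
  pplus_cont : forall u D s, directed pplus D -> is_lub pplus D s ->
    (forall d, D d -> exists r, pplus u d = Some r) ->
    exists r, pplus u s = Some r /\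
      is_lub pplus (fun y => exists d, D d /\ pplus u d = Some y) r;
  ptop : exists t, forall u, nle pplus u t
}.

Section Weightings.
Variables (S : psemiring) (Sigma : Type).

Definition le_S := nle (@pplus S).
Definition sum_S (I : Type) (f : I -> S) (s : S) := is_sum (@pplus S) (@pzero S) f s.

Definition countable (X : Sigma -> Prop) : Prop :=
  exists g : nat -> option Sigma, forall x, X x -> exists n, g n = Some x.

Definition supp (m : Sigma -> S) (x : Sigma) : Prop := m x <> pzero S.

Definition mass_is (m : Sigma -> S) (u : S) : Prop :=
  sum_S (fun x : {x : Sigma | supp m x} => m (proj1_sig x)) u.

Record wt := Wt {
  wfun :> Sigma -> S;
  wt_count : countable (supp wfun);
  wt_mass : exists u, mass_is wfun u
}.

Definition assertion := wt -> Prop.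

Definition Wall : assertion := fun _ => True.

Definition oneP (P : Sigma -> Prop) : assertion :=
  fun m => mass_is m (pone S) /\ (forall x, supp m x -> P x).

Definition boxP (P : Sigma -> Prop) : assertion :=
  fun m => forall x, supp m x -> P x.

Definition oplus (phi psi : assertion) : assertion :=
  fun m => exists m1 m2, phi m1 /\ psi m2 /\
    forall x, pplus (m1 x) (m2 x) = Some (m x).

Definition bigoplus (T : Type) (phi : T -> assertion) : assertion :=
  fun m => exists ms : T -> wt, (forall t, phi t (ms t)) /\
    forall x, sum_S (fun t => ms t x) (m x).

Definition bigcup (T : Type) (phi : T -> assertion) : assertion :=
  fun m => exists t, phi t m.

Definition scale_l (u : S) (phi : assertion) : assertion :=
  fun m => exists m', phi m' /\ forall x, m x = pmul u (m' x).

Definition scale_r (phi : assertion) (u : S) : assertion :=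
  fun m => exists m', phi m' /\ forall x, m x = pmul (m' x) u.

Definition subset (phi psi : assertion) : Prop := forall m, phi m -> psi m.

Inductive test :=
| TTrue | TFalse | TPrim (t : Sigma -> Prop)
| TNot (b : test) | TAnd (b1 b2 : test) | TOr (b1 b2 : test).

Fixpoint holds (b : test) (x : Sigma) : Prop :=
  match b with
  | TTrue => True | TFalse => False | TPrim t => t x
  | TNot b => ~ holds b x
  | TAnd b1 b2 => holds b1 x /\ holds b2 x
  | TOr b1 b2 => holds b1 x \/ holds b2 x
  end.

Inductive expr := ETest (b : test) | EWeight (u : S).

Definition eval (e : expr) (x : Sigma) : S :=
  match e with
  | ETest b => if excluded_middle_informative (holds b x) then pone S else pzero S
  | EWeight u => u
  end.

Variable Act : Type.

Inductive prog :=
| Skip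
| Seq (C1 C2 : prog)
| Plus (C1 C2 : prog)
| Assume (e : expr)
| Iter (C : prog) (e e' : expr)
| Atom (a : Act).

Variable Gamma : assertion -> Act -> assertion -> Prop.

Definition converges (psi : nat -> assertion) (psiinf : assertion) : Prop :=
  forall (ms : nat -> wt) (m : wt), (forall n, psi n (ms n)) ->
    (forall x, sum_S (fun n => ms n x) (m x)) -> psiinf m.

Inductive derivable : assertion -> prog -> assertion -> Prop :=
| d_axiom : forall phi a psi, Gamma phi a psi -> derivable phi (Atom a) psi
| d_skip : forall phi, derivable phi Skip phi
| d_seq : forall phi th psi C1 C2,
    derivable phi C1 th -> derivable th C2 psi -> derivable phi (Seq C1 C2) psi
| d_plus : forall phi psi1 psi2 C1 C2,
    derivable phi C1 psi1 -> derivable phi C2 psi2 ->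
    derivable phi (Plus C1 C2) (oplus psi1 psi2)
| d_assume : forall phi e u,
    (forall m x, phi m -> supp m x -> eval e x = u) ->
    derivable phi (Assume e) (scale_r phi u)
| d_iter : forall (phis psis : nat -> assertion) psiinf C e e',
    converges psis psiinf ->
    (forall n, derivable (phis n) (Seq (Assume e) C) (phis (Datatypes.S n))) ->
    (forall n, derivable (phis n) (Assume e') (psis n)) ->
    derivable (phis 0) (Iter C e e') psiinf
| d_false : forall C phi, derivable (fun _ => False) C phi
| d_true : forall phi C, derivable phi C Wall
| d_scale : forall u phi psi C, derivable phi C psi ->
    derivable (scale_l u phi) C (scale_l u psi)
| d_disj : forall phi1 phi2 psi1 psi2 C,
    derivable phi1 C psi1 -> derivable phi2 C psi2 ->
    derivable (fun m => phi1 m \/ phi2 m) C (fun m => psi1 m \/ psi2 m)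
| d_conj : forall phi1 phi2 psi1 psi2 C,
    derivable phi1 C psi1 -> derivable phi2 C psi2 ->
    derivable (fun m => phi1 m /\ phi2 m) C (fun m => psi1 m /\ psi2 m)
| d_choice : forall (T : Type) (phi phi' : T -> assertion) C,
    (forall t, derivable (phi t) C (phi' t)) ->
    derivable (bigoplus phi) C (bigoplus phi')
| d_exists : forall (T : Type) (phi phi' : T -> assertion) C,
    (forall t, derivable (phi t) C (phi' t)) ->
    derivable (bigcup phi) C (bigcup phi')
| d_conseq : forall phi phi' psi psi' C,
    subset phi' phi -> derivable phi C psi -> subset psi psi' ->
    derivable phi' C psi'.
End Weightings.

(* Every m in □P is the sum over t ∈ P of the point masses m(t)·η(t), i.e. lies
   in ⊕_{t ∈ P} m(t) ⊙ 1P.  Scaling the given triple by m(t) and combining with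
   (Choice) yields a postcondition ⊕_{t ∈ P} m(t) ⊙ □Q, which is contained in
   □Q; (Exists) over m and (Consequence) finish the proof. *)
From Stdlib Require Import List ClassicalEpsilon Classical ProofIrrelevance.
Import ListNotations.
Set Implicit Arguments.
Unset Strict Implicit.

Section Sums.
Variable S : psemiring.

Lemma nle_refl (u : S) : nle (@pplus S) u u.
Proof. exists (pzero S). apply pplus_0. Qed.

Lemma nle_0l (u : S) : nle (@pplus S) (pzero S) u.
Proof. exists u. rewrite pplus_comm. apply pplus_0. Qed.

Lemma fsum_functional (l : list S) (s s' : S) :
  fsum (@pplus S) (pzero S) l s -> fsum (@pplus S) (pzero S) l s' -> s = s'.
Proof.
  intros H; revert s'; induction H as [|u l s r _ IH Hr]; intros s' H';
    inversion H' as [|u' l' s0 r' Hs0 Hr']; subst; auto.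
  rewrite (IH _ Hs0) in Hr. congruence.
Qed.

Lemma sum_S_unique (I : Type) (f : I -> S) (s s' : S) :
  sum_S f s -> sum_S f s' -> s = s'.
Proof.
  intros [_ [Hub Hleast]] [_ [Hub' Hleast']].
  apply pnle_antisym; [apply Hleast | apply Hleast']; assumption.
Qed.

Variables (I : Type) (f : I -> S).

Lemma fsum_map_zero (l : list I) :
  (forall i, In i l -> f i = pzero S) -> fsum (@pplus S) (pzero S) (map f l) (pzero S).
Proof.
  induction l as [|a l IH]; intros Hl; simpl; econstructor.
  - apply IH. intros i Hi. apply Hl. now right.
  - rewrite (Hl a (or_introl eq_refl)). apply pplus_0.
Qed.

Section SingleSupport.
Variable i0 : I.
Hypothesis f_single : forall i, i <> i0 -> f i = pzero S.

Lemma fsum_map_single (l : list I) :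
  NoDup l -> In i0 l -> fsum (@pplus S) (pzero S) (map f l) (f i0).
Proof.
  induction l as [|a l IH]; intros Hnd Hin; [destruct Hin|].
  inversion Hnd as [|? ? Ha Hnd']; subst; simpl.
  destruct Hin as [<- | Hin].
  - econstructor; [|apply pplus_0].
    apply fsum_map_zero. intros i Hi. apply f_single. intros ->. contradiction.
  - econstructor; [exact (IH Hnd' Hin)|].
    rewrite f_single by (intros ->; contradiction).
    rewrite pplus_comm. apply pplus_0.
Qed.

Lemma fsum_map_single_cases (l : list I) :
  NoDup l -> fsum (@pplus S) (pzero S) (map f l) (f i0) \/
             fsum (@pplus S) (pzero S) (map f l) (pzero S).
Proof.
  intros Hnd. destruct (classic (In i0 l)) as [Hin | Hnin].
  - left. now apply fsum_map_single.
  - right. apply fsum_map_zero. intros i Hi. apply f_single. intros ->. contradiction.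
Qed.

Lemma sum_S_single (v : S) : f i0 = v -> sum_S f v.
Proof.
  intros <-. split; [|split].
  - intros l Hnd. destruct (fsum_map_single_cases Hnd) as [H | H]; eauto.
  - intros t [l [Hnd Ht]].
    destruct (fsum_map_single_cases Hnd) as [H | H];
      rewrite (fsum_functional Ht H); [apply nle_refl | apply nle_0l].
  - intros b Hb. apply Hb. exists [i0].
    assert (Hnd : NoDup [i0]) by (constructor; [intros [] | constructor]).
    split; [exact Hnd|]. apply fsum_map_single; [exact Hnd | now left].
Qed.

End SingleSupport.

Lemma sum_S_zero : (forall i, f i = pzero S) -> sum_S f (pzero S).
Proof.
  intros Hf. split; [|split].
  - intros l _. exists (pzero S). apply fsum_map_zero. auto.
  - intros t [l [_ Ht]].
    rewrite (fsum_functional Ht (fsum_map_zero (l := l) (fun i _ => Hf i))).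
    apply nle_refl.
  - intros b _. apply nle_0l.
Qed.

End Sums.

Section PointMasses.
Variables (S : psemiring) (Sigma : Type).

Definition point_fun (t : Sigma) (u : S) : Sigma -> S :=
  fun x => if excluded_middle_informative (x = t) then u else pzero S.

Lemma point_fun_at (t : Sigma) (u : S) : point_fun t u t = u.
Proof. unfold point_fun. now destruct excluded_middle_informative. Qed.

Lemma point_fun_off (t x : Sigma) (u : S) : x <> t -> point_fun t u x = pzero S.
Proof. unfold point_fun. now destruct excluded_middle_informative. Qed.

Lemma supp_point_fun (t x : Sigma) (u : S) : supp (point_fun t u) x -> x = t.
Proof.
  intros Hx. apply NNPP. intros Hxt. apply Hx. now apply point_fun_off.
Qed.

Lemma countable_supp_point_fun (t : Sigma) (u : S) : countable (supp (point_fun t u)).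
Proof.
  exists (fun _ => Some t). intros x Hx. exists 0. now rewrite (supp_point_fun Hx).
Qed.

Lemma mass_point_fun (t : Sigma) (u : S) : mass_is (point_fun t u) u.
Proof.
  unfold mass_is. destruct (classic (u = pzero S)) as [-> | Hu].
  - apply sum_S_zero. intros [x Hx]. exfalso. apply Hx.
    rewrite (supp_point_fun Hx). apply point_fun_at.
  - assert (Ht : supp (point_fun t u) t) by (red; now rewrite point_fun_at).
    apply (sum_S_single (i0 := exist _ t Ht)); [|apply point_fun_at].
    intros [x Hx] Hne. exfalso. apply Hne.
    destruct (supp_point_fun Hx). f_equal. apply proof_irrelevance.
Qed.

Definition point (t : Sigma) (u : S) : wt S Sigma :=
  Wt (countable_supp_point_fun t u) (ex_intro _ u (mass_point_fun t u)).

Lemma point_mul (t x : Sigma) (u v : S) :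
  point_fun t (pmul u v) x = pmul u (point_fun t v x).
Proof.
  unfold point_fun. destruct excluded_middle_informative; auto.
  now rewrite pmul_0r.
Qed.

Lemma point_oneP (P : Sigma -> Prop) (t : Sigma) : P t -> oneP P (point t (pone S)).
Proof.
  intros Ht. split; [apply mass_point_fun|].
  intros x Hx. now rewrite (supp_point_fun Hx).
Qed.

Lemma sum_points (P : Sigma -> Prop) (m : wt S Sigma) (x : Sigma) :
  boxP P m ->
  sum_S (fun t : {t | P t} => point_fun (proj1_sig t) (m (proj1_sig t)) x) (m x).
Proof.
  intros Hm. destruct (classic (m x = pzero S)) as [Hx | Hx].
  - rewrite Hx. apply sum_S_zero. intros [t Ht]. simpl.
    destruct (classic (x = t)) as [-> | Hxt]; [now rewrite point_fun_at | now apply point_fun_off].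
  - apply (sum_S_single (i0 := exist _ x (Hm x Hx))); [|apply point_fun_at].
    intros [t Ht] Hne. apply point_fun_off. intros ->.
    apply Hne. f_equal. apply proof_irrelevance.
Qed.

End PointMasses.

Section BoxAssertions.
Variables (S : psemiring) (Sigma : Type).

Lemma boxP_sub_bigoplus_oneP (P : Sigma -> Prop) (m : wt S Sigma) :
  boxP P m -> bigoplus (fun t : {t | P t} => scale_l (m (proj1_sig t)) (oneP P)) m.
Proof.
  intros Hm. exists (fun t => point (proj1_sig t) (m (proj1_sig t))). split.
  - intros [t Ht]. exists (point t (pone S)). split; [now apply point_oneP|].
    intros x. simpl. now rewrite <- point_mul, pmul_1r.
  - intros x. now apply sum_points.
Qed.

Lemma bigoplus_scale_boxP (T : Type) (u : T -> S) (Q : Sigma -> Prop) :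
  subset (bigoplus (fun t => scale_l (u t) (boxP Q))) (boxP Q).
Proof.
  intros m [ms [Hms Hsum]] x Hx. apply NNPP. intros HQ. apply Hx.
  apply (sum_S_unique (Hsum x)). apply sum_S_zero. intros t.
  destruct (Hms t) as [m' [Hm' ->]].
  destruct (classic (m' x = pzero S)) as [-> | Hx'].
  - apply pmul_0r.
  - exfalso. exact (HQ (Hm' x Hx')).
Qed.

End BoxAssertions.

Theorem lemmaE1 (S : psemiring) (Sigma Act : Type)
  (Gamma : assertion S Sigma -> Act -> assertion S Sigma -> Prop)
  (C : prog S Sigma Act) (P Q : Sigma -> Prop) :
  derivable Gamma (oneP P) C (boxP Q) ->
  derivable Gamma (boxP P) C (boxP Q).
Proof.
  intros HD.
  apply d_conseq with
    (phi := bigcup (fun m : wt S Sigma =>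
              bigoplus (fun t : {t | P t} => scale_l (m (proj1_sig t)) (oneP P))))
    (psi := bigcup (fun m : wt S Sigma =>
              bigoplus (fun t : {t | P t} => scale_l (m (proj1_sig t)) (boxP Q)))).
  - intros m Hm. exists m. now apply boxP_sub_bigoplus_oneP.
  - apply d_exists. intros m. apply d_choice. intros t. now apply d_scale.
  - intros m [m0 Hm]. exact (bigoplus_scale_boxP Hm).
Qed.
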